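(* Let $q=3^m$ with $m\ge 1$ and let $f(x)=x^{q+2}$ on $\mathbb{F}_{q^2}$. Then $\beta_f=q+2$. Moreover, if $q\ge 9$, then $$\nu_{q+2}=\begin{cases}\frac{q-1}{2},& m \text{ even},\\ \frac{q+1}{2},& m\text{ odd},\end{cases}\qquad \nu_q=\begin{cases}\frac{q-1}{2},& m \text{ even},\\ \frac{q-3}{2},& m\text{ odd}.\end{cases}$$
   Context: For $f:\mathbb{F}_{q^2}\to\mathbb{F}_{q^2}$ and $a,b\in\mathbb{F}_{q^2}$, $\beta_f(a,b)$ is the number of $(x,y)\in\mathbb{F}_{q^2}^2$ with $f(x)-f(y)=b$ and $f(x+a)-f(y+a)=b$; $\beta_f=\max_{a,b\in\mathbb{F}_{q^2}^*}\beta_f(a,b)$. For the power function $f$, the boomerang spectrum is taken with $a=1$: $\nu_i=\#\{b\in\mathbb{F}_{q^2}^*:\ \beta_f(1,b)=i\}$. *)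

From HB Require Import structures.
From mathcomp Require Import all_boot all_order all_algebra.
Set Implicit Arguments. Unset Strict Implicit. Unset Printing Implicit Defensive.
Import GRing.Theory.
Local Open Scope ring_scope.

Definition boomerang_entry (F : finFieldType) (f : F -> F) (a b : F) : nat :=
  #|[set xy : F * F | (f xy.1 - f xy.2 == b) && (f (xy.1 + a) - f (xy.2 + a) == b)]|.

Definition boomerang_uniformity (F : finFieldType) (f : F -> F) : nat :=
  (\max_(ab : F * F | (ab.1 != 0%R) && (ab.2 != 0%R)) boomerang_entry f ab.1 ab.2)%N.

Definition boomerang_spectrum_count (F : finFieldType) (f : F -> F) (i : nat) : nat :=
  #|[set b : F | (b != 0) && (boomerang_entry f 1 b == i)]|.

From HB Require Import structures.
From mathcomp Require Import all_boot all_order all_algebra all_field.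
From mathcomp Require Import ring zify.
Set Implicit Arguments. Unset Strict Implicit. Unset Printing Implicit Defensive.
Import GRing.Theory.
Local Open Scope ring_scope.

(* As f is a power map, beta(a, b) = beta(1, b / a^(q+2)), so a = 1 suffices.
   Let K = F_q be the field fixed by x |-> x^q and delta x = (x - 1)(x - x^q).
   In characteristic 3, f(x + 1) = f(x) + delta x + 1, so (x, y) solves the
   boomerang system for (1, b) iff f x - f y = b and delta x = delta y; the
   latter forces x, y in K, x = y, or x + y = -1.  Pairs in K contribute q
   solutions when b is in K (f is the cube map there) and none otherwise.  The
   pairs (1 + t, 1 - t) with t outside K are counted by the fibre over b of
   c(t) = f(1 + t) - f(1 - t) = t - t^q - t^(q+2).  For b in K this fibre is
   {t, t^q} when b = -(t + t^q) for some t outside K of norm t^(q+1) = -1,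
   and empty otherwise; for b outside K the norm of a solution determines it
   and is a root of a quintic, so there are at most 5 solutions.  Hence
   beta(1, b) is q + 2, q, or at most 5, and the b reaching q + 2 are
   counted through the q + 1 elements of norm -1, of which exactly the
   square roots of -1 lie in K, and those exist in K iff m is even. *)

Section Fibers.
Variables (T1 T2 : finType) (phi : T1 -> T2) (A : {set T1}) (C : {set T2}).
Hypothesis phiAC : {in A, forall x, phi x \in C}.

Lemma card_sum_fibers : #|A| = (\sum_(c in C) #|[set x in A | phi x == c]|)%N.
Proof.
rewrite -sum1_card (partition_big phi (mem C)) //.
by apply: eq_bigr => c _; rewrite sum1dep_card.
Qed.

Lemma card_le_fibers k :
  {in C, forall c, #|[set x in A | phi x == c]| <= k}%N -> (#|A| <= k * #|C|)%N.
Proof. by move=> le_k; rewrite card_sum_fibers mulnC -sum_nat_const leq_sum. Qed.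

Lemma card_fibers_eq k :
  {in C, forall c, #|[set x in A | phi x == c]| <= k}%N -> (k * #|C| <= #|A|)%N ->
  {in C, forall c, #|[set x in A | phi x == c]| = k}.
Proof.
move=> le_k; rewrite card_sum_fibers mulnC -sum_nat_const.
have /geq_leqif-> := leqif_sum (fun c (Cc : c \in C) => leqif_eq (le_k c Cc)).
by move=> /forall_inP eq_k c /eq_k/eqP.
Qed.

End Fibers.

Lemma card_roots_lt (R : finIdomainType) (p : {poly R}) :
  p != 0 -> (#|[set x | root p x]| < size p)%N.
Proof.
move=> p0; rewrite cardE; apply: max_poly_roots p0 _ (enum_uniq _).
by apply/allP => x; rewrite mem_enum inE.
Qed.

Lemma card_rootsXn_le (R : finIdomainType) n (c : R) :
  (0 < n)%N -> (#|[set x : R | x ^+ n == c]| <= n)%N.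
Proof.
move=> n_gt0; have sizeP := size_XnsubC c n_gt0.
have p0 : 'X^n - c%:P != 0 by rewrite -size_poly_eq0 sizeP.
rewrite -ltnS -sizeP; apply: leq_ltn_trans (card_roots_lt p0).
by apply: subset_leq_card; apply/subsetP => x; rewrite !inE rootE !hornerE subr_eq0.
Qed.

Lemma card_sqr_eq (R : finIdomainType) (r : R) :
  r != - r -> #|[set t : R | t ^+ 2 == r ^+ 2]| = 2.
Proof.
move=> rNr; transitivity #|[set r; - r]|; last by rewrite cards2 rNr.
by apply: eq_card => t; rewrite !inE eqf_sqr.
Qed.

Lemma expr3n_sqrN1 (R : comRingType) (t : R) n :
  t ^+ 2 = -1 -> t ^+ (3 ^ n) = (-1) ^+ n * t.
Proof.
move=> t2; elim: n => [|n IHn]; first by rewrite mul1r.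
have s2 : ((-1) ^+ n) ^+ 2 = 1 :> R by rewrite exprAC sqrrN !expr1n.
rewrite expnS mulnC exprM IHn [in RHS]exprS; move: s2; set s := (-1) ^+ n => s2.
ring: s2 t2.
Qed.

Section PowerBoomerang.
Variables (F : finFieldType) (d : nat).
Local Notation pw := (fun x : F => x ^+ d).

Lemma boomerang_entry_power_scale (a b : F) : a != 0 ->
  boomerang_entry pw a b = boomerang_entry pw 1 (b / a ^+ d).
Proof.
move=> a0; have ad0 : a ^+ d != 0 by rewrite expf_neq0.
pose scale (xy : F * F) := (a * xy.1, a * xy.2).
have scale_inj : injective scale.
  by move=> [x y] [x' y'] [/(mulfI a0)-> /(mulfI a0)->].
rewrite /boomerang_entry -(card_preimset _ scale_inj); apply: eq_card => -[x y].
have addM1 z : a * z + a = a * (z + 1) by rewrite mulrDr mulr1.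
rewrite !inE /= !addM1 !exprMn -!mulrBr.
have eq_scale u : (a ^+ d * u == b) = (u == b / a ^+ d).
  by rewrite (can2_eq (mulKf ad0) (mulVKf ad0)) mulrC.
by rewrite !eq_scale.
Qed.

Lemma boomerang_uniformity_power :
  boomerang_uniformity pw = (\max_(b : F | b != 0%R) boomerang_entry pw 1%R b)%N.
Proof.
apply/eqP; rewrite eqn_leq; apply/andP; split.
  apply/bigmax_leqP => -[a b] /= /andP[a0 b0]; rewrite boomerang_entry_power_scale //.
  by apply: leq_bigmax_cond; rewrite mulf_neq0 ?invr_eq0 ?expf_neq0.
apply/bigmax_leqP => b b0.
by apply: (leq_bigmax_cond (1, b)); rewrite /= oner_eq0.
Qed.

End PowerBoomerang.

Section FrobeniusFixedField.
Variables (F : finFieldType) (q : nat).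
Hypotheses (pcharq : [pchar F].-nat q) (cardF : #|F| = (q ^ 2)%N).

Lemma frobD (x y : F) : (x + y) ^+ q = x ^+ q + y ^+ q.
Proof. exact: exprDn_pchar. Qed.

Lemma frobN (x : F) : (- x) ^+ q = - x ^+ q.
Proof.
have q_gt0 : (0 < q)%N by case/andP: pcharq.
by apply/eqP; rewrite -addr_eq0 -frobD addNr expr0n eqn0Ngt q_gt0.
Qed.

Lemma frobB (x y : F) : (x - y) ^+ q = x ^+ q - y ^+ q.
Proof. by rewrite frobD frobN. Qed.

Lemma frobK (x : F) : (x ^+ q) ^+ q = x.
Proof. by rewrite -exprM mulnn -cardF expf_card. Qed.

Lemma q_gt1 : (1 < q)%N.
Proof.
by have := card_finNzRing_gt1 F; rewrite cardF; case: q => [|[|]].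
Qed.

Definition fixedq : {pred F} := fun x => x ^+ q == x.

Lemma fixedqE x : (x \in fixedq) = (x ^+ q == x).
Proof. by []. Qed.

Fact fixedq_subring_closed : subring_closed fixedq.
Proof.
by split=> [|x y|x y]; rewrite !fixedqE ?expr1n // ?frobB ?exprMn => /eqP-> /eqP->.
Qed.

HB.instance Definition _ := GRing.isSubringClosed.Build F fixedq
  fixedq_subring_closed.

Lemma fixedq_frob x : (x ^+ q \in fixedq) = (x \in fixedq).
Proof. by rewrite !fixedqE frobK eq_sym. Qed.

Lemma fixedq_norm x : x ^+ q.+1 \in fixedq.
Proof. by rewrite fixedqE exprS exprMn frobK mulrC. Qed.

Lemma fixedq_trace x : x + x ^+ q \in fixedq.
Proof. by rewrite fixedqE frobD frobK addrC. Qed.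

Let norm_fiber_le (c : F) : (#|[set x in [set~ 0%R] | x ^+ q.+1 == c]| <= q.+1)%N.
Proof.
apply: leq_trans (card_rootsXn_le c (ltn0Sn q)).
by apply: subset_leq_card; apply/subsetP => x; rewrite !inE => /andP[].
Qed.

Let norm_unit : {in [set~ 0], forall x, x ^+ q.+1 \in [set y in fixedq | y != 0]}.
Proof. by move=> x; rewrite !inE fixedq_norm; apply: expf_neq0. Qed.

Let card_unit : (q.+1 * q.-1)%N = #|[set~ (0 : F)]|.
Proof. by rewrite cardsC1 cardF; have := q_gt1; lia. Qed.

Lemma card_fixedq_unit : #|[set x in fixedq | x != 0]| = q.-1.
Proof.
have qB1_gt0 : (0 < q.-1)%N by rewrite -subn1 subn_gt0 q_gt1.
apply/eqP; rewrite eqn_leq; apply/andP; split.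
  apply: leq_trans (card_rootsXn_le 1 qB1_gt0); apply: subset_leq_card.
  apply/subsetP => x; rewrite !inE => /andP[/eqP xq x0].
  by apply/eqP/(mulIf x0); rewrite -exprSr prednK ?xq ?mul1r // ltnW ?q_gt1.
rewrite -(leq_pmul2l (ltn0Sn q)) card_unit.
exact: (card_le_fibers (phi := fun x => x ^+ q.+1) norm_unit (fun c _ => norm_fiber_le c)).
Qed.

Lemma card_norm_fiber c :
  c \in fixedq -> c != 0 -> #|[set x | x ^+ q.+1 == c]| = q.+1.
Proof.
move=> Kc c0; have Cc : c \in [set y in fixedq | y != 0] by rewrite inE Kc.
transitivity #|[set x in [set~ 0%R] | x ^+ q.+1 == c]|.
  apply: eq_card => x; rewrite !inE; case: (eqVneq x 0) => [->|//].
  by rewrite expr0n eq_sym (negPf c0).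
apply: (card_fibers_eq (phi := fun x => x ^+ q.+1) norm_unit) Cc => //.
by rewrite card_fixedq_unit card_unit.
Qed.

Lemma card_fixedq : #|fixedq| = q.
Proof.
rewrite (cardD1 0) rpred0 add1n -[RHS](ltn_predK q_gt1) -card_fixedq_unit.
by congr _.+1; apply: eq_card => x; rewrite !inE andbC.
Qed.

Section CharThree.
Variable m : nat.
Hypothesis q_def : q = (3 ^ m)%N.

Lemma m_gt0 : (0 < m)%N.
Proof. by have := q_gt1; rewrite q_def; case: m. Qed.

Lemma pchar3 : 3 \in [pchar F].
Proof. by have := pcharq; rewrite q_def pnatX pnatE // eqn0Ngt m_gt0 orbF. Qed.

Lemma three0 : (3 : F) = 0.
Proof. exact: pcharf0 pchar3. Qed.

(* Identities of characteristic 3 are proved by exhibiting the difference of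
   the two sides as an explicit multiple of 3 and calling [ring]. *)
Lemma eq_mod3 (x y z : F) : x - y = 3 * z -> x = y.
Proof. by rewrite three0 mul0r => /subr0_eq. Qed.

Lemma oppr1_neq1 : (-1 : F) != 1.
Proof. by rewrite -subr_eq0 -opprD oppr_eq0 -(dvdn_pcharf pchar3 2). Qed.

Lemma sqrN1_neqN (t : F) : t ^+ 2 = -1 -> t != - t.
Proof.
move=> t2; apply/eqP => tNt; move/eqP: oppr1_neq1; apply.
by rewrite -{1}t2 expr2 {2}tNt mulrN -expr2 t2 opprK.
Qed.

Lemma q_ge3 : (3 <= q)%N.
Proof. by rewrite q_def -{1}(expn1 3) leq_exp2l // m_gt0. Qed.

Lemma q_odd : odd q.
Proof. by rewrite q_def oddX orbT. Qed.

Lemma cube_inj : injective (fun x : F => x ^+ 3).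
Proof. exact: fmorph_inj (pFrobenius_aut pchar3). Qed.

Lemma cubeB (x y : F) : (x - y) ^+ 3 = x ^+ 3 - y ^+ 3.
Proof. by apply: (@eq_mod3 _ _ (x * y ^+ 2 - x ^+ 2 * y)); ring. Qed.

Lemma expq2_fixedq x : x \in fixedq -> x ^+ (q + 2) = x ^+ 3.
Proof. by rewrite fixedqE exprD => /eqP->; rewrite -exprS. Qed.

Definition delta (x : F) := (x - 1) * (x - x ^+ q).

Lemma expq2D1 x : (x + 1) ^+ (q + 2) = x ^+ (q + 2) + delta x + 1.
Proof.
rewrite /delta !exprD frobD expr1n; move: (x ^+ q) => xq.
by apply: (@eq_mod3 _ _ (x * xq + x)); ring.
Qed.

Lemma delta_fixedq x : x \in fixedq -> delta x = 0.
Proof. by rewrite fixedqE /delta => /eqP->; rewrite subrr mulr0. Qed.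

Lemma deltaN1B x : delta (-1 - x) = delta x.
Proof.
rewrite /delta !frobB frobN expr1n; move: (x ^+ q) => xq.
by apply: (@eq_mod3 _ _ (x - xq)); ring.
Qed.

Lemma delta_add_frob x : delta x + delta x ^+ q = (x - x ^+ q) ^+ 2.
Proof. by rewrite /delta exprMn !frobB frobK expr1n; move: (x ^+ q) => xq; ring. Qed.

Lemma delta_eq_cases x y : delta x = delta y ->
  [\/ (x \in fixedq) && (y \in fixedq), x = y | x + y = -1].
Proof.
move=> dxy; have /eqP := congr1 (fun d => d + d ^+ q) dxy.
rewrite /= !delta_add_frob -subr_eq0 subr_sqr.
have Ku : (x - x ^+ q == 0) = (x \in fixedq) by rewrite subr_eq0 eq_sym.
have Kv : (y - y ^+ q == 0) = (y \in fixedq) by rewrite subr_eq0 eq_sym.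
move: dxy Ku Kv; rewrite /delta; move: (x - x ^+ q) (y - y ^+ q) => u v dxy Ku Kv.
rewrite mulf_eq0 subr_eq0 addr_eq0 => /orP[/eqP uv | /eqP uNv].
  have /eqP : (x - y) * u = 0.
    have -> : (x - y) * u = (x - 1) * u - (y - 1) * u by ring.
    by rewrite {2}uv -dxy subrr.
  rewrite mulf_eq0 subr_eq0 => /orP[/eqP-> | u0]; first exact: Or32.
  by apply: Or31; rewrite -Ku -Kv -uv u0.
have /eqP : (x + y + 1) * u = 0.
  move: dxy; rewrite uNv => dxy.
  have -> : (x + y + 1) * - v = (x - 1) * - v - (y - 1) * v - 3 * v by ring.
  by rewrite dxy subrr three0 mul0r subr0.
rewrite mulf_eq0 addr_eq0 => /orP[/eqP xy | u0]; last first.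
  by apply: Or31; rewrite -Ku -Kv u0 -oppr_eq0 -uNv.
by apply: Or33; rewrite xy; ring.
Qed.

Lemma boomerang_eqs x y b :
  (x ^+ (q + 2) - y ^+ (q + 2) == b) &&
    ((x + 1) ^+ (q + 2) - (y + 1) ^+ (q + 2) == b) =
  (x ^+ (q + 2) - y ^+ (q + 2) == b) && (delta x == delta y).
Proof.
rewrite !expq2D1; case: eqP => //= <-.
move: (x ^+ (q + 2)) (y ^+ (q + 2)) (delta x) (delta y) => fx fy dx dy.
have -> : fx + dx + 1 - (fy + dy + 1) = dx - dy + (fx - fy) by ring.
by rewrite -{2}[fx - fy]add0r (inj_eq (addIr _)) subr_eq0.
Qed.

Definition cdiff (t : F) := (1 + t) ^+ (q + 2) - (1 - t) ^+ (q + 2).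

Definition cdiff_fiber b := [set t | (t \notin fixedq) && (cdiff t == b)].

Lemma boomerang_solutions b : b != 0 ->
  [set xy : F * F | (xy.1 ^+ (q + 2) - xy.2 ^+ (q + 2) == b) &&
     ((xy.1 + 1) ^+ (q + 2) - (xy.2 + 1) ^+ (q + 2) == b)] =
  [set xy | [&& xy.1 \in fixedq, xy.2 \in fixedq & (xy.1 - xy.2) ^+ 3 == b]]
  :|: [set (1 + t, 1 - t) | t in cdiff_fiber b].
Proof.
move=> b0; apply/setP => -[x y]; rewrite !inE /= boomerang_eqs.
apply/idP/idP.
  case/andP => /eqP fxy /eqP/delta_eq_cases[/andP[Kx Ky] | xy | xy].
  - by rewrite Kx Ky cubeB -!expq2_fixedq // fxy eqxx.
  - by move: b0; rewrite -fxy xy subrr eqxx.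
  have yE : y = -1 - x by rewrite -xy addrAC subrr add0r.
  case Kx: (x \in fixedq).
    have Ky : y \in fixedq by rewrite yE rpredB ?rpredN1.
    by rewrite Ky cubeB -!expq2_fixedq // fxy eqxx.
  apply/orP; right; apply/imsetP; exists (x - 1).
    rewrite inE rpredBr ?rpred1 // Kx /cdiff -fxy yE subrKC /=.
    suff -> : 1 - (x - 1) = -1 - x by [].
    by apply: (@eq_mod3 _ _ 1); ring.
  rewrite yE subrKC; congr (_, _).
  by apply: (@eq_mod3 _ _ (-1)); ring.
case/orP => [/and3P[Kx Ky /eqP xy3] | /imsetP[t]].
  by rewrite !expq2_fixedq // -cubeB xy3 !delta_fixedq ?eqxx.
rewrite inE => /andP[Kt /eqP <-] [-> ->]; rewrite /cdiff eqxx /=.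
suff -> : 1 - t = -1 - (1 + t) by rewrite deltaN1B.
by apply: (@eq_mod3 _ _ 1); ring.
Qed.

Lemma card_fixedq_cube_diff b :
  #|[set xy : F * F | [&& xy.1 \in fixedq, xy.2 \in fixedq & (xy.1 - xy.2) ^+ 3 == b]]|
  = if b \in fixedq then q else 0%N.
Proof.
case: ifPn => Kb; last first.
  apply/eqP; rewrite cards_eq0; apply/eqP/setP => -[x y]; rewrite !inE /=.
  apply/negbTE; apply: contra Kb => /and3P[Kx Ky /eqP<-].
  by rewrite rpredX ?rpredB.
have [cbrt _ cbrtK] := injF_bij cube_inj; set r := cbrt b.
have r3 : r ^+ 3 = b by exact: cbrtK.
have Kr : r \in fixedq.
  by rewrite fixedqE; apply/eqP/cube_inj; rewrite /= exprAC r3 (eqP Kb).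
pose shift x := (x, x - r).
have shift_inj : injective shift by move=> x1 x2 [].
rewrite -card_fixedq -(card_imset fixedq shift_inj); apply: eq_card => -[x y].
rewrite inE /=; apply/and3P/imsetP => [[Kx Ky /eqP xy3] | [z Kz [-> ->]]].
  have xyr : x - y = r by apply: cube_inj; rewrite /= xy3 r3.
  by exists x; rewrite // /shift -xyr subKr.
by rewrite Kz rpredB // subKr r3.
Qed.

Lemma cdiffE t : cdiff t = t - t ^+ q - t ^+ 2 * t ^+ q.
Proof.
rewrite /cdiff !exprD frobD frobB expr1n; move: (t ^+ q) => tq.
by apply: (@eq_mod3 _ _ (t + tq + t ^+ 2 * tq)); ring.
Qed.

Lemma cdiff_frob t :
  cdiff t - cdiff t ^+ q = - ((t - t ^+ q) * (t ^+ q.+1 + 1)).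
Proof.
rewrite cdiffE !frobB exprMn frobK exprAC [t ^+ q.+1]exprS; move: (t ^+ q) => tq.
by apply: (@eq_mod3 _ _ (t - tq)); ring.
Qed.

Lemma cdiff_solve t :
  t * (t ^+ q.+1 * (t ^+ q.+1 + 1)) = (1 - t ^+ q.+1) * cdiff t + cdiff t ^+ q.
Proof.
rewrite cdiffE !frobB exprMn frobK exprAC [t ^+ q.+1]exprS; move: (t ^+ q) => tq.
by apply: (@eq_mod3 _ _ (t ^+ 2 * tq)); ring.
Qed.

Definition normN1_nonfixed := [set t | (t ^+ q.+1 == -1) && (t \notin fixedq)].

Definition peak_set := [set - (t + t ^+ q) | t in normN1_nonfixed].

Lemma normN1_nonfixed_frob t :
  t \in normN1_nonfixed -> t ^+ q \in normN1_nonfixed.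
Proof.
by rewrite !inE fixedq_frob => /andP[/eqP tN ->]; rewrite exprAC tN frobN expr1n eqxx.
Qed.

Lemma cdiff_normN1 t : t ^+ q.+1 = -1 -> cdiff t = - (t + t ^+ q).
Proof.
move=> tN; rewrite cdiffE -mulrA -exprS tN.
by apply: (@eq_mod3 _ _ t); ring.
Qed.

Lemma cdiff_fiber_fixedq b : b \in fixedq ->
  cdiff_fiber b = [set t in normN1_nonfixed | - (t + t ^+ q) == b].
Proof.
move=> Kb; apply/setP => t; rewrite !inE.
case Kt: (t \in fixedq); rewrite ?andbF //=.
case tN: (t ^+ q.+1 == -1); first by rewrite cdiff_normN1 // (eqP tN).
apply/negbTE/eqP => ctb; have /eqP := cdiff_frob t.
rewrite ctb (eqP Kb) subrr eq_sym oppr_eq0 mulf_eq0 subr_eq0 eq_sym -fixedqE Kt.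
by rewrite addr_eq0 tN.
Qed.

Lemma normN1_trace_fiber t : t \in normN1_nonfixed ->
  [set s in normN1_nonfixed | - (s + s ^+ q) == - (t + t ^+ q)] = [set t; t ^+ q].
Proof.
move=> Tt; apply/setP => s; rewrite in_set in_set2.
apply/andP/orP => [[Ts /eqP/oppr_inj str]|[]/eqP->]; last 2 first.
- by rewrite Tt eqxx.
- by rewrite normN1_nonfixed_frob // frobK addrC eqxx.
move: Ts Tt; rewrite !inE ![_ ^+ q.+1]exprS => /andP[/eqP sN _] /andP[/eqP tN _].
move: str sN tN; move: (s ^+ q) (t ^+ q) => sq tq str sN tN.
have /eqP : (s - t) * (s - tq) = 0.
  have -> : (s - t) * (s - tq) = s * (s + sq) - s * (t + tq) - s * sq + t * tq by ring.
  by rewrite str subrr sN tN add0r opprK addrN.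
by rewrite mulf_eq0 !subr_eq0 => /orP.
Qed.

Lemma card_normN1_nonfixed_peak : #|normN1_nonfixed| = (2 * #|peak_set|)%N.
Proof.
rewrite (card_sum_fibers (phi := fun t => - (t + t ^+ q)) (C := peak_set)).
  rewrite mulnC -sum_nat_const; apply: eq_bigr => _ /imsetP[t Tt ->].
  by rewrite normN1_trace_fiber // cards2 eq_sym -fixedqE; move: Tt; rewrite inE => /andP[_ ->].
by move=> t Tt; apply: imset_f.
Qed.

Lemma card_cdiff_fiber_fixedq b : b \in fixedq ->
  #|cdiff_fiber b| = if b \in peak_set then 2 else 0.
Proof.
move=> Kb; rewrite cdiff_fiber_fixedq //; case: ifPn => [/imsetP[t Tt ->] | peakNb].
  rewrite normN1_trace_fiber // cards2 eq_sym -fixedqE.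
  by move: Tt; rewrite inE => /andP[_ ->].
apply/eqP; rewrite cards_eq0; apply/eqP/setP => t; rewrite in_set0 [LHS]in_set.
apply/negbTE; apply: contra peakNb => /andP[Tt /eqP <-]; exact: imset_f.
Qed.

(* With N = t^(q+1), the product of [cdiff_solve] and its conjugate reads
   N^3 (N + 1)^2 = ((1 - N) b + b^q) ((1 - N) b^q + b). *)
Definition cdiff_poly b : {poly F} :=
  'X^3 * ('X + 1) ^+ 2 -
  ((- b)%:P * 'X + (b + b ^+ q)%:P) * ((- b ^+ q)%:P * 'X + (b + b ^+ q)%:P).

Lemma size_cdiff_poly b : size (cdiff_poly b) = 6%N.
Proof.
have size_lin (c d : F) : (size (c%:P * 'X + d%:P)%R <= 2)%N.
  by rewrite size_MXaddC; case: ifP => // _; rewrite ltnS size_polyC leq_b1.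
have size_lead : size ('X^3 * ('X + 1) ^+ 2 : {poly F}) = 6%N.
  have -> : 'X + 1 = 'X - (-1)%:P :> {poly F} by rewrite polyCN opprK polyC1.
  rewrite size_Mmonic ?monic_exp ?monicXsubC ?size_polyXn ?size_exp_XsubC //.
  by rewrite -size_poly_eq0 size_polyXn.
rewrite /cdiff_poly size_polyDl size_lead // size_polyN.
apply: leq_ltn_trans (size_polyMleq _ _) _.
have := leq_add (size_lin (- b) (b + b ^+ q)) (size_lin (- b ^+ q) (b + b ^+ q)).
by case: (_ + _)%N => [|[|[|[|[|]]]]].
Qed.

Lemma cdiff_fiber_norm b t : b \notin fixedq -> t \in cdiff_fiber b ->
  let N := t ^+ q.+1 in
  [/\ N * (N + 1) != 0, t * (N * (N + 1)) = (1 - N) * b + b ^+ q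
    & root (cdiff_poly b) N].
Proof.
rewrite inE => Kb /andP[Kt /eqP ctb] N.
have KN : N ^+ q = N by apply/eqP; exact: fixedq_norm.
have NE : N = t * t ^+ q by rewrite /N exprS.
have solve_t := cdiff_solve t; rewrite ctb -/N in solve_t.
clearbody N.
have solve_tq : t ^+ q * (N * (N + 1)) = (1 - N) * b ^+ q + b.
  have := congr1 (fun x => x ^+ q) solve_t.
  by rewrite /= !(exprMn, frobD, frobN, expr1n, frobK) KN.
split => //.
  rewrite mulf_eq0 negb_or; apply/andP; split.
    apply: contra Kt; rewrite NE mulf_eq0 => /orP[]/eqP t0.
      by rewrite t0 rpred0.
    by rewrite -[t]frobK t0 expr0n eqn0Ngt (ltnW q_gt1) rpred0.
  apply: contra Kb; rewrite addr_eq0 => /eqP N1.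
  move: solve_t; rewrite N1 opprK addNr !mulr0 fixedqE => /esym/eqP.
  by rewrite addrC addr_eq0 => /eqP->; apply/eqP/(@eq_mod3 _ _ (- b)); ring.
rewrite rootE !(hornerD, hornerN, hornerM, hornerC, hornerX, hornerXn, horner_exp); apply/eqP.
transitivity (N ^+ 3 * (N + 1) ^+ 2 - t * (N * (N + 1)) * (t ^+ q * (N * (N + 1)))).
  by rewrite solve_t solve_tq; move: (b ^+ q) => bq; ring.
by rewrite NE; move: (t ^+ q) => tq; ring.
Qed.

Lemma card_cdiff_fiber_nonfixed b : b \notin fixedq -> (#|cdiff_fiber b| <= 5)%N.
Proof.
move=> Kb; have norm_inj : {in cdiff_fiber b &, injective (fun t => t ^+ q.+1)}.
  move=> t1 t2 /(cdiff_fiber_norm Kb)[c0 e1 _] /(cdiff_fiber_norm Kb)[_ e2 _] /= eN.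
  by apply: (mulIf c0); rewrite e1 eN e2.
have p0 : cdiff_poly b != 0 by rewrite -size_poly_eq0 size_cdiff_poly.
rewrite -(card_in_imset norm_inj) -ltnS -(size_cdiff_poly b).
apply: leq_ltn_trans (card_roots_lt p0); apply/subset_leq_card/subsetP.
by move=> _ /imsetP[t tG ->]; rewrite inE; case: (cdiff_fiber_norm Kb tG).
Qed.

Lemma exists_sqrN1 : exists r : F, r ^+ 2 = -1.
Proof.
have : (0 < #|[set x : F | (x ^+ q.+1 == -1)%R]|)%N.
  by rewrite card_norm_fiber ?rpredN1 ?oppr_eq0 ?oner_eq0.
case/card_gt0P => x; rewrite inE => /eqP xN.
exists (x ^+ (q.+1)./2); rewrite -exprM -xN; congr (_ ^+ _).
by rewrite muln2 -[RHS]odd_double_half /= q_odd.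
Qed.

Lemma fixedq_sqrN1 t : t ^+ 2 = -1 -> (t \in fixedq) = ~~ odd m.
Proof.
move=> t2; rewrite fixedqE q_def (expr3n_sqrN1 _ t2) -signr_odd.
by case: (odd m); rewrite ?mul1r ?eqxx // mulN1r eq_sym (negbTE (sqrN1_neqN t2)).
Qed.

Lemma normN1_fixed :
  [set t in fixedq | t ^+ q.+1 == -1] =
  if odd m then set0 else [set t | t ^+ 2 == -1].
Proof.
apply/setP => t.
have -> : (t \in [set t in fixedq | t ^+ q.+1 == -1]) = (t ^+ 2 == -1) && ~~ odd m.
  rewrite inE; have [t2 | t2] := eqVneq (t ^+ 2) (-1); rewrite -?(fixedq_sqrN1 t2).
    by apply/andb_idr => /eqP Kt; rewrite exprS Kt -expr2 t2.
  by case Kt: (t \in fixedq) => //=; rewrite exprS (eqP Kt) -expr2 (negbTE t2).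
by case: (odd m); rewrite !inE ?andbT ?andbF.
Qed.

Lemma card_normN1_nonfixed : #|normN1_nonfixed| = if odd m then q.+1 else q.-1.
Proof.
have [r r2] := exists_sqrN1.
have card_fixed : #|[set t in fixedq | t ^+ q.+1 == -1]| = if odd m then 0%N else 2%N.
  rewrite normN1_fixed; case: ifP => _; first by rewrite cards0.
  by rewrite -r2 card_sqr_eq // sqrN1_neqN.
have := cardsID [set t in fixedq] [set t : F | t ^+ q.+1 == -1].
rewrite card_norm_fiber ?rpredN1 ?oppr_eq0 ?oner_eq0 //.
have -> : [set t : F | t ^+ q.+1 == -1] :&: [set t in fixedq] =
          [set t in fixedq | t ^+ q.+1 == -1] by apply/setP => t; rewrite !inE andbC.
have -> : [set t : F | t ^+ q.+1 == -1] :\: [set t in fixedq] = normN1_nonfixed.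
  by apply/setP => t; rewrite !inE andbC.
rewrite card_fixed => e; apply: (@addnI (if odd m then 0 else 2)%N); rewrite e.
by have := q_gt1; case: (odd m) => /=; lia.
Qed.

Lemma card_peak_set : (2 * #|peak_set|)%N = if odd m then q.+1 else q.-1.
Proof. by rewrite -card_normN1_nonfixed_peak card_normN1_nonfixed. Qed.

Lemma peak_set_sub : peak_set \subset [set b in fixedq | b != 0].
Proof.
apply/subsetP => _ /imsetP[t Tt ->]; rewrite inE rpredN fixedq_trace oppr_eq0 /=.
apply: contraTneq Tt => /eqP; rewrite addrC addr_eq0 => /eqP tq.
rewrite inE exprS tq mulrN -expr2 eqr_opp sqrf_eq1.
by apply/negP => /andP[/orP[]/eqP->]; rewrite ?rpred1 ?rpredN1.
Qed.

Lemma boomerang_entry_expq2 b : b != 0 ->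
  boomerang_entry (fun x : F => x ^+ (q + 2)) 1 b =
  if b \in fixedq then (if b \in peak_set then q + 2 else q)%N
  else #|cdiff_fiber b|.
Proof.
move=> b0; rewrite /boomerang_entry boomerang_solutions // cardsU.
rewrite card_fixedq_cube_diff card_imset => [|s t [/addrI] //].
rewrite disjoint_setI0 ?cards0 ?subn0; last first.
  apply/pred0P => -[x y] /=; apply/negP => /andP[].
  rewrite !inE /= => /and3P[Kx _ _] /imsetP[t].
  rewrite inE => /andP[/negP Kt _] [xE _]; apply: Kt.
  by rewrite -(addKr 1 t) -xE rpredD ?rpredN1.
case: ifP => Kb //; rewrite card_cdiff_fiber_fixedq //.
by case: ifP; rewrite ?addn0.
Qed.

Lemma boomerang_uniformity_expq2 :
  boomerang_uniformity (fun x : F => x ^+ (q + 2)) = (q + 2)%N.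
Proof.
rewrite boomerang_uniformity_power; apply/eqP; rewrite eqn_leq; apply/andP; split.
  apply/bigmax_leqP => b b0; rewrite boomerang_entry_expq2 //.
  case: ifPn => Kb; first by case: ifP; rewrite ?leq_addr.
  by apply: leq_trans (card_cdiff_fiber_nonfixed Kb) _; have := q_ge3; lia.
have [b peak_b] : exists b, b \in peak_set.
  apply/card_gt0P; rewrite -(ltn_pmul2l (isT : 0 < 2)%N) muln0 card_peak_set.
  by have := q_gt1; case: (odd m) => /=; lia.
have := subsetP peak_set_sub b peak_b; rewrite inE => /andP[Kb b0].
apply: leq_trans (leq_bigmax_cond b b0).
by rewrite boomerang_entry_expq2 // Kb peak_b.
Qed.

Section LargeQ.
Hypothesis q_gt5 : (5 < q)%N.

Lemma boomerang_entry_nonfixed_lt b : b != 0 -> b \notin fixedq ->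
  (boomerang_entry (fun x : F => x ^+ (q + 2)) 1%R b < q)%N.
Proof.
move=> b0 Kb; rewrite boomerang_entry_expq2 // (negPf Kb).
exact: leq_ltn_trans (card_cdiff_fiber_nonfixed Kb) q_gt5.
Qed.

Lemma boomerang_entry_eq_peak b : b != 0 ->
  (boomerang_entry (fun x : F => x ^+ (q + 2)) 1%R b == q + 2)%N = (b \in peak_set).
Proof.
move=> b0; have [Kb | Kb] := boolP (b \in fixedq).
  rewrite boomerang_entry_expq2 // Kb.
  by case: ifP; rewrite ?eqxx // -[X in X == _]addn0 eqn_add2l.
have -> : b \in peak_set = false.
  by apply: contraNF Kb => /(subsetP peak_set_sub); rewrite inE => /andP[].
by apply/negbTE; rewrite neq_ltn ltn_addr ?boomerang_entry_nonfixed_lt.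
Qed.

Lemma boomerang_entry_eq_q b : b != 0 ->
  (boomerang_entry (fun x : F => x ^+ (q + 2)) 1%R b == q)%N =
  (b \in fixedq) && (b \notin peak_set).
Proof.
move=> b0; have [Kb | Kb] := boolP (b \in fixedq).
  rewrite boomerang_entry_expq2 // Kb.
  by case: ifP; rewrite ?eqxx // -[X in _ == X]addn0 eqn_add2l.
by rewrite andFb; apply/negbTE; rewrite neq_ltn boomerang_entry_nonfixed_lt.
Qed.

Lemma boomerang_spectrum_expq2 :
  boomerang_spectrum_count (fun x : F => x ^+ (q + 2)) (q + 2) = #|peak_set| /\
  boomerang_spectrum_count (fun x : F => x ^+ (q + 2)) q = (q.-1 - #|peak_set|)%N.
Proof.
rewrite /boomerang_spectrum_count; split.
  apply/eq_card => b; rewrite inE; case: (eqVneq b 0) => [-> | b0].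
    by apply/esym/(contraNF (subsetP peak_set_sub 0)); rewrite inE eqxx andbF.
  exact: boomerang_entry_eq_peak.
rewrite -card_fixedq_unit -(setIidPr peak_set_sub) -cardsD.
apply/eq_card => b; rewrite !inE; case: (eqVneq b 0) => [-> | b0] /=.
  by rewrite !andbF.
by rewrite boomerang_entry_eq_q // andbT andbC.
Qed.

End LargeQ.

End CharThree.

End FrobeniusFixedField.

Local Close Scope ring_scope.

Theorem theorem8 (F : finFieldType) (m : nat) (hm : (1 <= m)%N)
  (hcard : #|F| = (3 ^ m) ^ 2) :
  let q := (3 ^ m)%N in
  let f := fun x : F => (x ^+ (q + 2))%R in
  boomerang_uniformity f = (q + 2)%N /\
  ((9 <= q)%N ->
     boomerang_spectrum_count f (q + 2) =
       (if odd m then (q + 1) %/ 2 else (q - 1) %/ 2)%N /\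
     boomerang_spectrum_count f q =
       (if odd m then (q - 3) %/ 2 else (q - 1) %/ 2)%N).
Proof.
move=> q f; rewrite {}/f.
have pcharq : [pchar F]%R.-nat q.
  by rewrite pnatX pnatE // (card_finPcharP (n := (m * 2)%N)) // hcard expnM.
have q_def : q = (3 ^ m)%N by [].
split; first exact (boomerang_uniformity_expq2 pcharq hcard q_def).
move=> q_ge9; have q_gt5 : (5 < q)%N by apply: leq_trans q_ge9.
have [-> ->] := boomerang_spectrum_expq2 pcharq hcard q_def q_gt5.
by have := card_peak_set pcharq hcard q_def; case: (odd m) => /=; lia.
Qed.
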